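(* Let $p\in(0,1]$, let $X\ne\{0\}$ be a finite-dimensional $p$-Banach space and let $Z\subset B_X$ be a symmetric set with $\mathrm{co}_p(Z)=B_X$. Let $\mathcal B$ be the set of all algebraic bases of $X$ consisting of points of $Z$. Then for every $x\in X$, \[\|x\|=\min\Big\{\Big(\sum_{b\in\mathfrak b}|a_b|^p\Big)^{1/p}:\mathfrak b\in\mathcal B,\ a\in\mathbb R^{\mathfrak b}\text{ with }x=\sum_{b\in\mathfrak b}a_bb\Big\}.\]
   Context: A $p$-Banach space is a complete vector space with a $p$-norm (norm axioms with $\|x+y\|^p\le\|x\|^p+\|y\|^p$ replacing the triangle inequality); $B_X$ is its closed unit ball. A set $A\subset X$ is $p$-convex if $\lambda x+\mu y\in A$ whenever $x,y\in A$ and $\lambda,\mu\ge0$ with $\lambda^p+\mu^p=1$; $\mathrm{co}_p(A)$ is the smallest $p$-convex set containing $A$. $Z$ symmetric means $Z=-Z$. *)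

From HB Require Import structures.
From mathcomp Require Import all_boot all_order all_algebra.
From mathcomp Require Import all_classical all_reals all_analysis.
Set Implicit Arguments. Unset Strict Implicit. Unset Printing Implicit Defensive.
Import Order.TTheory GRing.Theory Num.Theory.
Local Open Scope ring_scope.
Local Open Scope classical_set_scope.

Section PBanach.
Variables (R : realType) (V : vectType R).

Definition is_pnorm (p : R) (nrm : V -> R) : Prop :=
  [/\ forall x, 0 <= nrm x,
      forall x, nrm x = 0 -> x = 0,
      forall (l : R) x, nrm (l *: x) = `|l| * nrm x &
      forall x y, nrm (x + y) `^ p <= nrm x `^ p + nrm y `^ p].

Definition pnorm_complete (nrm : V -> R) : Prop :=
  forall u : nat -> V,
    (forall e : R, 0 < e -> exists N : nat, forall m n : nat,
        (N <= m)%N -> (N <= n)%N -> nrm (u m - u n) < e) ->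
    exists l : V, forall e : R, 0 < e -> exists N : nat, forall n : nat,
        (N <= n)%N -> nrm (u n - l) < e.

Definition unit_ball (nrm : V -> R) : set V := [set x | nrm x <= 1].

Definition p_convex (p : R) (A : set V) : Prop :=
  forall x y (l m : R), A x -> A y -> 0 <= l -> 0 <= m ->
    l `^ p + m `^ p = 1 -> A (l *: x + m *: y).

Definition co_p (p : R) (Z : set V) : set V :=
  [set x | forall A : set V, p_convex p A -> Z `<=` A -> A x].

Definition symmetric_set (Z : set V) : Prop := forall z, Z z <-> Z (- z).

Definition Zbasis (Z : set V) (b : seq V) : Prop :=
  basis_of fullv b /\ (forall v, v \in b -> Z v).

Definition pcoef_norm (p : R) (n : nat) (a : 'I_n -> R) : R :=
  (\sum_(i < n) `|a i| `^ p) `^ (p^-1).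

End PBanach.

(* Combinations of points of Z whose coefficients have p-sum at most 1 form a
   p-convex set containing Z, hence containing B_X; so every x is a combination
   of points of Z whose coefficients have p-sum at most ||x||^p.  If these points
   are dependent, move the coefficients c along a linear relation d: writing
   c_i + t d_i = c_i (1 - t l_i), the tangent bound y^p <= 1 + p (y - 1) shows
   that, as long as no coefficient changes sign, the p-sum is at most
   sum_i |c_i|^p (1 - p t l_i), which is affine in t.  Moving t in the direction
   where this bound decreases, up to the first zero coefficient, removes a point
   without increasing the p-sum.  The independent points finally obtained,
   completed to a basis by further points of Z with zero coefficients, realise
   ||x||; no representation does better by the p-triangle inequality, since
   ||z|| <= 1 on Z. *)

From HB Require Import structures.
From mathcomp Require Import all_boot all_order all_algebra.
From mathcomp Require Import all_classical all_reals all_analysis.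
From mathcomp Require Import ring lra.
Set Implicit Arguments. Unset Strict Implicit. Unset Printing Implicit Defensive.
Import Order.TTheory GRing.Theory Num.Theory.
Local Open Scope ring_scope.
Local Open Scope classical_set_scope.

Lemma powRK (R : realType) (a q : R) : 0 <= a -> q != 0 -> (a `^ q) `^ q^-1 = a.
Proof. by move=> a0 q0; rewrite -powRrM mulfV // powRr1. Qed.

Section TangentBound.
Variables (R : realType) (p : R).
Hypotheses (p_gt0 : 0 < p) (p_le1 : p <= 1).

(* Young's inequality with exponents 1/p and 1/(1-p), applied to x^p and 1. *)
Lemma powR_le_tangent (x : R) : 0 <= x -> x `^ p <= p * x + (1 - p).
Proof.
move=> x0; have [->|p_neq1] := eqVneq p 1.
  by rewrite powRr1 // mul1r subrr addr0.
have p_lt1 : p < 1 by rewrite lt_neqAle p_neq1.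
have := @conjugate_powR R (x `^ p) 1 p^-1 (1 - p)^-1 (powR_ge0 _ _) ler01.
rewrite invr_gt0 p_gt0 invr_gt0 subr_gt0 p_lt1 !invrK subrKC powR1.
by rewrite mulr1 powRK ?gt_eqF // mul1r mulrC => /(_ isT isT erefl).
Qed.

Section AffineZero.
Variables (I : finType) (w : I -> R).
Hypothesis w_ge0 : forall i, 0 <= w i.

Lemma affine_zero_powR_le_pos (l : I -> R) :
  0 <= \sum_i w i * l i -> (exists i, 0 < l i) ->
  exists t j, t * l j = 1 /\
    \sum_i w i * `|1 - t * l i| `^ p <= \sum_i w i.
Proof.
move=> wl_ge0 [i0 li0].
have [j _ lj_max] := @arg_maxP _ _ I i0 xpredT l isT.
have lj_gt0 : 0 < l j by apply: lt_le_trans li0 (lj_max _ _).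
exists (l j)^-1, j; split; first by rewrite mulVf ?gt_eqF.
have tangent i : `|1 - (l j)^-1 * l i| `^ p <= 1 - p * ((l j)^-1 * l i).
  have li_le : (l j)^-1 * l i <= 1.
    by rewrite mulrC ler_pdivrMr // mul1r; apply: lj_max.
  rewrite ger0_norm ?subr_ge0 //.
  by apply: le_trans (powR_le_tangent _) _; [rewrite subr_ge0 | lra].
apply: (@le_trans _ _ (\sum_i w i * (1 - p * ((l j)^-1 * l i)))).
  by apply: ler_sum => i _; apply: ler_wpM2l.
have -> : \sum_i w i * (1 - p * ((l j)^-1 * l i)) =
    \sum_i w i - p * (l j)^-1 * \sum_i w i * l i.
  by rewrite mulr_sumr -sumrB; apply: eq_bigr => i _; ring.
by rewrite gerBl mulr_ge0 // mulr_ge0 ?invr_ge0 ?ltW.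
Qed.

Lemma affine_zero_powR_le (l : I -> R) : (exists i, l i != 0) ->
  exists t j, t * l j = 1 /\
    \sum_i w i * `|1 - t * l i| `^ p <= \sum_i w i.
Proof.
move=> [i0 li0].
have flip : (exists t j, t * - l j = 1 /\
    \sum_i w i * `|1 - t * - l i| `^ p <= \sum_i w i) ->
  exists t j, t * l j = 1 /\ \sum_i w i * `|1 - t * l i| `^ p <= \sum_i w i.
  case=> t [j [tj le]]; exists (- t), j; rewrite mulNr -mulrN; split => //.
  by under eq_bigr do rewrite mulNr -mulrN.
have [wl_ge0|wl_lt0] := leP 0 (\sum_i w i * l i).
  have [pos|nopos] := pselect (exists i, 0 < l i).
    exact: affine_zero_powR_le_pos.
  have l_le0 i : l i <= 0.
    by rewrite leNgt; apply/negP => li; apply: nopos; exists i.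
  apply/flip/affine_zero_powR_le_pos; last first.
    by exists i0; rewrite oppr_gt0 lt_neqAle li0 l_le0.
  by apply: sumr_ge0 => i _; rewrite mulrN oppr_ge0 mulr_ge0_le0.
apply/flip/affine_zero_powR_le_pos.
  by under eq_bigr do rewrite mulrN; rewrite sumrN oppr_ge0 ltW.
apply/not_existsP => l_ge0; move: wl_lt0; rewrite ltNge sumr_ge0 // => i _.
by rewrite mulr_ge0 // leNgt -oppr_gt0; apply/negP/l_ge0.
Qed.
End AffineZero.

Lemma line_zero_powR_le (I : finType) (c d : I -> R) : (exists i, d i != 0) ->
  exists t j, c j + t * d j = 0 /\
    \sum_i `|c i + t * d i| `^ p <= \sum_i `|c i| `^ p.
Proof.
move=> [i0 di0].
have [[j cj0]|c_neq0] := pselect (exists j, c j = 0).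
  by exists 0, j; rewrite mul0r addr0; under eq_bigr do rewrite mul0r addr0.
have {}c_neq0 i : c i != 0 by apply/eqP => ci; apply: c_neq0; exists i.
pose l i := - d i / c i.
have lineE t i : c i + t * d i = c i * (1 - t * l i) by rewrite /l; field.
have l_neq0 : exists i, l i != 0.
  by exists i0; rewrite /l mulf_neq0 ?oppr_eq0 ?invr_eq0.
have [t [j [tlj le]]] :=
  @affine_zero_powR_le _ (fun i => `|c i| `^ p) (fun i => powR_ge0 _ _) l l_neq0.
exists t, j; rewrite lineE tlj subrr mulr0; split => //.
by under eq_bigr do rewrite lineE normrM powRM //.
Qed.
End TangentBound.

Lemma not_free_relation (K : fieldType) (V : vectType K) (X : seq V) :
  ~~ free X -> exists k : 'I_(size X) -> K,
    \sum_i k i *: X`_i = 0 /\ exists i, k i != 0.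
Proof.
move=> /negP nfX; apply/not_existsP => indep; apply: nfX.
apply/(@freeP _ _ _ (in_tuple X)) => k k0 i.
by apply: contra_notP (indep k) => /eqP ki; split => //; exists i.
Qed.

Section Combinations.
Variables (R : realType) (V : vectType R).

Definition lcomb (s : seq (R * V)) : V := \sum_(q <- s) q.1 *: q.2.

Definition pcost (p : R) (s : seq (R * V)) : R := \sum_(q <- s) `|q.1| `^ p.

Lemma lcomb_nth s :
  lcomb s = \sum_(i < size (map snd s)) (map fst s)`_i *: (map snd s)`_i.
Proof.
rewrite /lcomb (big_nth (0, 0)) -(size_map snd s) big_mkord.
by apply: eq_bigr => i _; rewrite !(nth_map (0, 0)) // -(size_map snd s).
Qed.

Lemma pcost_nth p s :
  pcost p s = \sum_(i < size (map snd s)) `|(map fst s)`_i| `^ p.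
Proof.
rewrite /pcost (big_nth (0, 0)) -(size_map snd s) big_mkord.
by apply: eq_bigr => i _; rewrite (nth_map (0, 0)) // -(size_map snd s).
Qed.

Definition scale_coefs (t : R) (s : seq (R * V)) := [seq (t * q.1, q.2) | q <- s].

Lemma lcomb_scale t s : lcomb (scale_coefs t s) = t *: lcomb s.
Proof.
by rewrite /lcomb big_map scaler_sumr; apply: eq_bigr => q _; rewrite scalerA.
Qed.

Lemma pcost_scale p t s :
  0 <= t -> pcost p (scale_coefs t s) = t `^ p * pcost p s.
Proof.
move=> t_ge0; rewrite /pcost big_map mulr_sumr; apply: eq_bigr => q _.
by rewrite normrM powRM // ger0_norm.
Qed.

Lemma map_snd_scale t s : map snd (scale_coefs t s) = map snd s.
Proof. by rewrite -map_comp. Qed.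

Lemma pcost_ge0 p s : 0 <= pcost p s.
Proof. by apply: sumr_ge0 => q _; apply: powR_ge0. Qed.

Variables (p : R).
Hypotheses (p_gt0 : 0 < p) (p_le1 : p <= 1).

Lemma exists_shorter_lcomb s : ~~ free (map snd s) ->
  exists s', (size s' < size s)%N /\ lcomb s' = lcomb s /\
    pcost p s' <= pcost p s /\ {subset map snd s' <= map snd s}.
Proof.
set X := map snd s => /not_free_relation [k [k0 k_neq0]].
pose c (i : 'I_(size X)) := (map fst s)`_i.
have [t [j [cj le]]] := line_zero_powR_le p_gt0 p_le1 c k_neq0.
have sum_rem (M : nmodType) (F : 'I_(size X) -> M) :
    \sum_i F i = F j + \sum_(i <- rem j (enum 'I_(size X))) F i.
  by rewrite -big_enum /= (big_rem _ (mem_enum _ j)).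
pose f i := (c i + t * k i, X`_i).
exists (map f (rem j (enum 'I_(size X)))); split; [|split; [|split]].
- rewrite (size_map f) size_rem ?mem_enum // size_enum_ord.
  rewrite -(size_map snd s) ltn_predL; exact: leq_ltn_trans (leq0n j) (ltn_ord j).
- rewrite [RHS]lcomb_nth /lcomb big_map /=.
  have -> : \sum_i c i *: X`_i = \sum_i (c i + t * k i) *: X`_i.
    under [RHS]eq_bigr do rewrite scalerDl -scalerA.
    by rewrite big_split /= -scaler_sumr k0 scaler0 addr0.
  by rewrite sum_rem cj scale0r add0r.
- rewrite [X in _ <= X]pcost_nth /pcost big_map /=; apply: le_trans le.
  by rewrite sum_rem cj normr0 powR0 ?gt_eqF // add0r.
- by move=> _ /mapP [_ /mapP [i _ ->] ->]; apply: mem_nth.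
Qed.

Lemma exists_free_lcomb s :
  exists s', lcomb s' = lcomb s /\ pcost p s' <= pcost p s /\
    free (map snd s') /\ {subset map snd s' <= map snd s}.
Proof.
elim: {s}(size s).+1 {-2}s (ltnSn (size s)) => // n IH s s_lt.
have [free_s|] := boolP (free (map snd s)).
  by exists s; split; [|split; [exact: lexx|split]].
move=> /exists_shorter_lcomb [s1 [s1_lt [cs1 [ps1 sub1]]]].
have [s2 [cs2 [ps2 [free2 sub2]]]] := IH s1 (leq_trans s1_lt s_lt).
exists s2; rewrite cs2 cs1; split; [done | split; last split] => //.
- exact: le_trans ps1.
- by move=> v /sub2 /sub1.
Qed.

End Combinations.

Lemma free_extend_basis (K : fieldType) (V : vectType K) (Z : set V) :
    (forall U : {vspace V}, (forall z, Z z -> z \in U) -> U = fullv) ->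
  forall X, free X -> (forall v, v \in X -> Z v) ->
  exists2 Y, (forall v, v \in Y -> Z v) & basis_of fullv (Y ++ X).
Proof.
move=> Z_full X.
suff ext k : (\dim {:V} <= k + size X)%N -> free X ->
    (forall v, v \in X -> Z v) ->
    exists2 Y, (forall v, v \in Y -> Z v) & basis_of fullv (Y ++ X).
  by apply: (ext (\dim {:V})); rewrite leq_addr.
elim: k X => [|k IH] X dimX freeX XZ.
  by exists [::] => //; rewrite cat0s basisEfree freeX subvf.
have [dimX'|dimX'] := leqP (\dim {:V}) (size X).
  by exists [::] => //; rewrite cat0s basisEfree freeX subvf.
have [z Zz zX] : exists2 z, Z z & z \notin <<X>>%VS.
  have [//|noZ] := pselect (exists2 z, Z z & z \notin <<X>>%VS); exfalso.
  have spanX : <<X>>%VS = fullv.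
    by apply: Z_full => z Zz; apply: contra_notT noZ => zX; exists z.
  by move: dimX'; rewrite -spanX (eqnP freeX) ltnn.
have [|||Y YZ basisY] := IH (z :: X).
- by rewrite /= addnS -addSn.
- by rewrite free_cons zX freeX.
- by move=> v; rewrite inE => /predU1P [->|/XZ].
exists (rcons Y z); last by rewrite cat_rcons.
by move=> v; rewrite mem_rcons inE => /predU1P [->|/YZ].
Qed.

Section PCombinations.
Variables (R : realType) (V : vectType R) (p : R) (Z : set V).

Definition pcomb_ball : set V :=
  [set lcomb s | s in
    [set s | (forall v, v \in map snd s -> Z v) /\ pcost p s <= 1]].

Lemma pcomb_ball_p_convex : p_convex p pcomb_ball.
Proof.
move=> _ _ l m [s1 [s1Z ps1] <-] [s2 [s2Z ps2] <-] l_ge0 m_ge0 lm1.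
exists (scale_coefs l s1 ++ scale_coefs m s2); last first.
  by rewrite /lcomb big_cat -!/(lcomb _) !lcomb_scale.
split.
  by move=> v; rewrite map_cat !map_snd_scale mem_cat => /orP [/s1Z|/s2Z].
rewrite /pcost big_cat -!/(pcost _ _) !pcost_scale // -lm1.
by rewrite lerD // ler_piMr ?powR_ge0.
Qed.

Lemma sub_pcomb_ball : Z `<=` pcomb_ball.
Proof.
move=> z Zz; exists [:: (1, z)]; last by rewrite /lcomb big_seq1 scale1r.
split; first by move=> v; rewrite inE => /eqP ->.
by rewrite /pcost big_seq1 normr1 powR1.
Qed.
End PCombinations.

Section PNorm.
Variables (R : realType) (V : vectType R) (p : R) (nrm : V -> R).
Hypotheses (p_gt0 : 0 < p) (p_le1 : p <= 1) (nrm_p : is_pnorm p nrm).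

Lemma pnorm_ge0 x : 0 <= nrm x.
Proof. by case: nrm_p. Qed.

Lemma pnormZ (l : R) x : nrm (l *: x) = `|l| * nrm x.
Proof. by case: nrm_p. Qed.

Lemma pnorm_gt0 x : x != 0 -> 0 < nrm x.
Proof.
case: nrm_p => _ nrm_eq0 _ _ x_neq0; rewrite lt_def pnorm_ge0 andbT.
by apply: contra x_neq0 => /eqP/nrm_eq0 ->.
Qed.

Lemma pnorm_sum_powR (I : Type) (r : seq I) (F : I -> V) :
  nrm (\sum_(i <- r) F i) `^ p <= \sum_(i <- r) nrm (F i) `^ p.
Proof.
case: nrm_p => _ _ _ nrmD; elim/big_rec2: _ => [|i y v _ le_vy].
  by rewrite -(scale0r 0) pnormZ normr0 mul0r powR0 ?gt_eqF.
by apply: le_trans (nrmD _ _) _; rewrite lerD2l.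
Qed.

Variable Z : set V.
Hypothesis Z_ball : Z `<=` unit_ball nrm.

Lemma pnorm_le_pcoef_norm (b : seq V) (a : 'I_(size b) -> R) :
  (forall v, v \in b -> Z v) -> nrm (\sum_i a i *: b`_i) <= pcoef_norm p a.
Proof.
move=> bZ; rewrite /pcoef_norm.
rewrite -[X in X <= _](powRK (pnorm_ge0 _) (lt0r_neq0 p_gt0)).
apply: ge0_ler_powR; rewrite ?nnegrE ?powR_ge0 ?invr_ge0 ?(ltW p_gt0) //.
  by apply: sumr_ge0 => i _; apply: powR_ge0.
apply: le_trans (pnorm_sum_powR _ _) _; apply: ler_sum => i _.
rewrite pnormZ powRM ?pnorm_ge0 // ler_piMr ?powR_ge0 //.
have b_i_le1 : nrm b`_i <= 1 by apply/Z_ball/bZ/mem_nth.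
have := @ge0_ler_powR R p (ltW p_gt0) (nrm b`_i) 1.
by rewrite powR1 !nnegrE pnorm_ge0 ler01; apply.
Qed.

Hypothesis ball_co_p : unit_ball nrm `<=` co_p p Z.

Lemma exists_lcomb_pcost_le x : exists s, (forall v, v \in map snd s -> Z v) /\
  lcomb s = x /\ pcost p s <= nrm x `^ p.
Proof.
have [->|x_neq0] := eqVneq x 0.
  exists [::]; rewrite /lcomb /pcost !big_nil.
  by split=> //; split=> //; apply: powR_ge0.
have nx_gt0 := pnorm_gt0 x_neq0.
have : unit_ball nrm ((nrm x)^-1 *: x).
  rewrite /unit_ball /= pnormZ ger0_norm ?invr_ge0 ?(ltW nx_gt0) //.
  by rewrite mulVf ?gt_eqF.
move=> /ball_co_p.
move=> /(_ _ (@pcomb_ball_p_convex _ _ p Z) (@sub_pcomb_ball _ _ p Z)).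
move=> [s [sZ ps] lcomb_s]; exists (scale_coefs (nrm x) s).
rewrite map_snd_scale lcomb_scale lcomb_s scalerKV ?gt_eqF //.
split=> //; split=> //.
by rewrite pcost_scale ?(ltW nx_gt0) // ler_piMr ?powR_ge0.
Qed.

Lemma Z_spanning (U : {vspace V}) : (forall z, Z z -> z \in U) -> U = fullv.
Proof.
move=> ZU; apply/vspaceP => x; rewrite memvf.
have [s [sZ [<- _]]] := exists_lcomb_pcost_le x.
by rewrite /lcomb big_seq; apply: memv_suml => q qs; apply/memvZ/ZU/sZ/map_f.
Qed.

Lemma exists_pnorm_basis x : exists (b : seq V) (a : 'I_(size b) -> R),
  Zbasis Z b /\ x = \sum_i a i *: b`_i /\ pcoef_norm p a = nrm x.
Proof.
have [s0 [s0Z [cs0 ps0]]] := exists_lcomb_pcost_le x.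
have [s [cs [ps [free_s sub_s]]]] := exists_free_lcomb p_gt0 p_le1 s0.
have sZ v : v \in map snd s -> Z v by move/sub_s/s0Z.
have [Y YZ basisY] := free_extend_basis Z_spanning free_s sZ.
pose s' := [seq (0, y) | y <- Y] ++ s.
have snd_s' : map snd s' = Y ++ map snd s.
  by rewrite map_cat -map_comp map_id.
have lcomb_s' : lcomb s' = lcomb s.
  by rewrite /lcomb big_cat /= big_map big1 ?add0r // => y _; rewrite scale0r.
have pcost_s' : pcost p s' = pcost p s.
  rewrite /pcost big_cat /= big_map big1 ?add0r // => y _.
  by rewrite normr0 powR0 ?gt_eqF.
have x_eq : x = \sum_(i < size (map snd s')) (map fst s')`_i *: (map snd s')`_i.
  by rewrite -lcomb_nth lcomb_s' cs cs0.
exists (map snd s'), (fun i => (map fst s')`_i); split; [|split] => //.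
  split; first by rewrite snd_s'.
  by rewrite snd_s' => v; rewrite mem_cat => /orP [/YZ|/sZ].
apply/le_anti/andP; split; last first.
  rewrite {1}x_eq; apply: pnorm_le_pcoef_norm => v.
  by rewrite snd_s' mem_cat => /orP [/YZ|/sZ].
rewrite /pcoef_norm -pcost_nth pcost_s'.
rewrite -[X in _ <= X](powRK (pnorm_ge0 x) (lt0r_neq0 p_gt0)).
apply: ge0_ler_powR; rewrite ?nnegrE ?powR_ge0 ?pcost_ge0 //.
  by rewrite invr_ge0 ltW.
exact: le_trans ps ps0.
Qed.
End PNorm.

Theorem lemma2p4 (R : realType) (V : vectType R) (p : R) (nrm : V -> R)
  (Z : set V) :
  0 < p -> p <= 1 ->
  is_pnorm p nrm -> pnorm_complete nrm ->
  (exists x : V, x != 0) ->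
  Z `<=` unit_ball nrm -> symmetric_set Z ->
  co_p p Z = unit_ball nrm ->
  forall x : V,
    (exists (b : seq V) (a : 'I_(size b) -> R),
        Zbasis Z b /\ x = \sum_(i < size b) a i *: b`_i /\
        pcoef_norm p a = nrm x) /\
    (forall (b : seq V) (a : 'I_(size b) -> R),
        Zbasis Z b -> x = \sum_(i < size b) a i *: b`_i ->
        nrm x <= pcoef_norm p a).
Proof.
(* Neither completeness (automatic in finite dimension), nor X <> 0, nor the
   symmetry of Z (coefficients may be negative) is needed. *)
move=> p_gt0 p_le1 nrm_p _ _ Z_ball _ co_pZ x; split.
  by apply: exists_pnorm_basis => //; rewrite co_pZ.
by move=> b a [_ bZ] ->; apply: (pnorm_le_pcoef_norm p_gt0 nrm_p Z_ball).
Qed.
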